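(* Let $R=(v_1,\dots,v_\ell)$ be a route and $\xi\in[N]$. For any vector $y^\xi\in\mathbb{Z}^{V_+}_{\ge0}$, we have $y^\xi\in\mathcal{Y}^\xi(\vec R)$ if and only if there exist $f\in\mathbb{R}^A_{\ge0}$ and $g\in\mathbb{R}^{V_+}_{\ge0}$ such that $f_{(v_{i-1},v_i)}+f_{(v_{i+1},v_i)}+d^\xi(v_i)=f_{(v_i,v_{i+1})}+f_{(v_i,v_{i-1})}+g_{v_i}$ for all $i\in[\ell]$; $f_{(v_{i-1},v_i)}\le C/2$ and $f_{(v_i,v_{i-1})}\le C/2$ for all $i\in[\ell+1]$; and $g_{v_i}\le C\,y^\xi_{v_i}$ for all $i\in[\ell]$. In particular, $\mathcal{Y}^\xi(\vec R)=\mathcal{Y}^\xi(\overleftarrow{R})$.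
   Context: $G=(V,E)$ complete undirected graph with $V=\{0\}\cup V_+$ ($0$ depot, $V_+$ customers); $D=(V,A)$ replaces each edge by two opposite arcs. Capacity $C\in\mathbb{Q}_{>0}$; scenarios $\xi\in[N]$ with demand vectors $d^\xi\in\mathbb{Q}^{V_+}_{\ge0}$, $d^\xi(v)\le C$. A route $R=(v_1,\dots,v_\ell)$ is the cycle $0,v_1,\dots,v_\ell,0$ through distinct customers; $v_0=v_{\ell+1}=0$. Its two directed versions are $\vec R=(v_1,\dots,v_\ell)$ (arcs $(0,v_1),(v_1,v_2),\dots,(v_\ell,0)$) and $\overleftarrow R=(v_\ell,\dots,v_1)$. For a directed route $(u_1,\dots,u_\ell)$ (with $u_0=u_{\ell+1}=0$) and scenario $\xi$, $\mathcal{Y}^\xi$ of it is the set of integer vectors $y^\xi\in\mathbb{Z}^{V_+}_{\ge0}$ for which there exist $f\in\mathbb{R}^A_{\ge0}$, $g\in\mathbb{R}^{V_+}_{\ge0}$ with $f_{(u_{i-1},u_i)}+d^\xi(u_i)=f_{(u_i,u_{i+1})}+g_{u_i}$ for $i\in[\ell]$, $f_{(u_{i-1},u_i)}\le C$ for $i\in[\ell+1]$, and $g_{u_i}\le Cy^\xi_{u_i}$ for $i\in[\ell]$. *)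

From HB Require Import structures.
From mathcomp Require Import all_boot all_order all_algebra.
From mathcomp Require Import reals.
Set Implicit Arguments. Unset Strict Implicit. Unset Printing Implicit Defensive.
Import Order.TTheory GRing.Theory Num.Theory.
Local Open Scope ring_scope.

(* Customers V_+ form a finite type T; vertices V = option T with the depot
   0 encoded as None.  Arcs are ordered pairs (u,w) of distinct vertices; an
   arc flow f in R^A is represented by a function option T -> option T -> R
   (its values on the non-arcs (u,u) are irrelevant). *)

(* A (directed) route (u_1,...,u_l) is a sequence s of customers.
   [rpt s i] is u_i, with u_0 = u_{l+1} = 0 (the depot). *)
Definition rpt (T : Type) (s : seq T) (i : nat) : option T :=
  nth None (None :: map Some s ++ [:: None]) i.

Definition is_route (T : eqType) (s : seq T) : Prop := uniq s /\ (0 < size s)%N.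

(* Membership of y in Y^xi of the directed route s, where d is the demand
   vector d^xi of the scenario and C the capacity. *)
Definition inY (R : realType) (T : finType) (C : rat) (d : T -> rat)
    (s : seq T) (y : T -> int) : Prop :=
  (forall v, 0 <= y v) /\
  exists (f : option T -> option T -> R) (g : T -> R),
    (forall u w, u != w -> 0 <= f u w) /\
    (forall v, 0 <= g v) /\
    (forall i v, (0 < i <= size s)%N -> rpt s i = Some v ->
       f (rpt s i.-1) (rpt s i) + ratr (d v) = f (rpt s i) (rpt s i.+1) + g v) /\
    (forall i, (0 < i <= (size s).+1)%N -> f (rpt s i.-1) (rpt s i) <= ratr C) /\
    (forall i v, (0 < i <= size s)%N -> rpt s i = Some v ->
       g v <= ratr C * (y v)%:~R).

From HB Require Import structures.
From mathcomp Require Import all_boot all_order all_algebra.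
From mathcomp Require Import reals.
From mathcomp Require Import zify lra.
Set Implicit Arguments. Unset Strict Implicit. Unset Printing Implicit Defensive.
Import Order.TTheory GRing.Theory Num.Theory.
Local Open Scope ring_scope.

(* A directed flow f with loads in [0, C] along the route is traded for two
   opposite flows with loads in [0, C/2]: put f/2 on every arc and (C - f)/2
   on its reverse.  Conversely, the net flow F(u,w) - F(w,u) shifted by C/2 is
   a directed flow.  Both transformations preserve the balance at every
   customer, and the two-way formulation is invariant under reversing the
   route, which gives Y(R) = Y(rev R). *)

Lemma rptE (T : Type) (x0 : T) (s : seq T) i :
  rpt s i = if (0 < i <= size s)%N then Some (nth x0 s i.-1) else None.
Proof.
rewrite /rpt; case: i => [|k] //=.
rewrite nth_cat size_map; case: ltnP => k_lt.
  by rewrite (nth_map x0).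
by case: (k - size s)%N => [|[]].
Qed.

Lemma rpt_rev (T : Type) (s : seq T) i :
  rpt (rev s) i = rpt s ((size s).+1 - i).
Proof.
case: s => [|x0 s']; first by rewrite /rpt /=; case: i => [|[|[|k]]].
rewrite !(@rptE _ x0) size_rev; case: ifP => i_in.
  by rewrite ifT ?nth_rev; [congr (Some (nth _ _ _))|..]; lia.
by rewrite ifF //; lia.
Qed.

Lemma rpt_size1 (T : Type) (s : seq T) : size s = 1%N -> rpt s 2 = rpt s 0.
Proof. by case: s => [|x [|]]. Qed.

Lemma rpt_inj (T : eqType) (s : seq T) i j :
  uniq s -> (i <= (size s).+1)%N -> (j <= (size s).+1)%N -> rpt s i = rpt s j ->
  i = j \/ ((i = 0 \/ i = (size s).+1) /\ (j = 0 \/ j = (size s).+1))%N.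
Proof.
case: s => [|x0 s'] s_uniq i_le j_le; first by move: i_le j_le => /=; lia.
rewrite !(@rptE _ x0); case: ifP => i_in; case: ifP => j_in // ; last by lia.
by case=> /eqP; rewrite nth_uniq //; [move/eqP|..]; lia.
Qed.

Lemma rpt_step_neq (T : eqType) (s : seq T) j :
  uniq s -> (0 < size s)%N -> (0 < j <= (size s).+1)%N -> rpt s j.-1 != rpt s j.
Proof. by move=> s_uniq s_gt0 j_in; apply/eqP => /rpt_inj-/(_ s_uniq); lia. Qed.

Definition route_arc (T : eqType) (s : seq T) (u w : option T) : bool :=
  has (fun j => (rpt s j.-1 == u) && (rpt s j == w)) (iota 1 (size s).+1).

Lemma route_arcP (T : eqType) (s : seq T) u w :
  reflect (exists j, (0 < j <= (size s).+1)%N /\ rpt s j.-1 = u /\ rpt s j = w)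
          (route_arc s u w).
Proof.
apply: (iffP hasP) => [[j]|[j [j_in [<- <-]]]].
  by rewrite mem_iota => j_in /andP[/eqP <- /eqP <-]; exists j; split=> //; lia.
by exists j; rewrite ?mem_iota ?eqxx //; lia.
Qed.

Lemma route_arc_rpt (T : eqType) (s : seq T) j :
  (0 < j <= (size s).+1)%N -> route_arc s (rpt s j.-1) (rpt s j).
Proof. by move=> j_in; apply/route_arcP; exists j. Qed.

Lemma route_arc_reverse (T : eqType) (s : seq T) k :
  is_route s -> (0 < k <= (size s).+1)%N ->
  route_arc s (rpt s k) (rpt s k.-1) -> size s = 1%N.
Proof.
move=> [s_uniq s_gt0] k_in /route_arcP [j [j_in [ej1 ej]]].
have := @rpt_inj _ s j.-1 k s_uniq ltac:(lia) ltac:(lia) ej1.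
have := @rpt_inj _ s j k.-1 s_uniq ltac:(lia) ltac:(lia) ej.
lia.
Qed.

Section TwoWayFlows.
Variables (R : realType) (T : finType) (C : rat) (d : T -> rat) (y : T -> int).
Local Notation c := (ratr C : R).
Implicit Types (s : seq T) (f F : option T -> option T -> R).

Definition inY_twoway s : Prop :=
   exists f (g : T -> R),
     (forall u w, u != w -> 0 <= f u w) /\
     (forall v, 0 <= g v) /\
     (forall i v, (0 < i <= size s)%N -> rpt s i = Some v ->
        f (rpt s i.-1) (rpt s i) + f (rpt s i.+1) (rpt s i) + ratr (d v)
        = f (rpt s i) (rpt s i.+1) + f (rpt s i) (rpt s i.-1) + g v) /\
     (forall i, (0 < i <= (size s).+1)%N ->
        f (rpt s i.-1) (rpt s i) <= c / 2 /\
        f (rpt s i) (rpt s i.-1) <= c / 2) /\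
     (forall i v, (0 < i <= size s)%N -> rpt s i = Some v ->
        g v <= c * (y v)%:~R).

Lemma inY_twoway_rev s : inY_twoway s -> inY_twoway (rev s).
Proof.
move=> [f [g [f_ge0 [g_ge0 [f_bal [f_le g_le]]]]]].
exists f, g; rewrite size_rev; split=> //; split=> //.
have rpt_rev_pred i : (0 < i <= (size s).+1)%N ->
    rpt (rev s) i.-1 = rpt s ((size s).+1 - i).+1.
  by move=> i_gt0; rewrite rpt_rev; congr rpt; lia.
split; [|split] => i.
- move=> v i_in; rewrite (rpt_rev_pred i) ?rpt_rev //; last by lia.
  rewrite (_ : (size s).+1 - i.+1 = ((size s).+1 - i).-1)%N; last by lia.
  by move=> v_at; have := f_bal ((size s).+1 - i)%N v ltac:(lia) v_at; lra.
- move=> i_in; rewrite rpt_rev_pred ?rpt_rev //.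
  by have [] := f_le ((size s).+1 - i).+1 ltac:(lia).
- by move=> v i_in; rewrite rpt_rev; apply: g_le; lia.
Qed.

Definition split_flow s f u w : R :=
  if route_arc s u w then f u w / 2
  else if route_arc s w u then (c - f w u) / 2 else 0.

Definition net_flow s F u w : R :=
  if route_arc s u w then F u w - F w u + c / 2 else 0.

Lemma inY_twoway_of_inY s : is_route s -> inY R C d s y -> inY_twoway s.
Proof.
move=> s_route [_ [f [g [f_ge0 [g_ge0 [f_bal [f_le g_le]]]]]]].
have [s_uniq s_gt0] := s_route.
have f_arc u w : route_arc s u w -> 0 <= f u w <= c.
  by move=> /route_arcP [j [j_in [<- <-]]]; rewrite f_ge0 ?rpt_step_neq ?f_le.
have c_ge0 : 0 <= c.
  by have := f_arc _ _ (@route_arc_rpt _ s 1%N ltac:(lia)); lra.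
have F_bounds u w : 0 <= split_flow s f u w <= c / 2.
  rewrite /split_flow; case: ifP => [/f_arc|_]; first lra.
  by case: ifP => [/f_arc|_]; lra.
have F_arc j : (0 < j <= (size s).+1)%N ->
    split_flow s f (rpt s j.-1) (rpt s j) = f (rpt s j.-1) (rpt s j) / 2.
  by move=> j_in; rewrite /split_flow route_arc_rpt.
have F_rev j : (0 < j <= (size s).+1)%N -> size s != 1%N ->
    split_flow s f (rpt s j) (rpt s j.-1) = (c - f (rpt s j.-1) (rpt s j)) / 2.
  move=> j_in s_ne1; rewrite /split_flow route_arc_rpt // ifF //.
  by apply/negP => /route_arc_reverse-/(_ s_route j_in)/eqP; apply/negP.
exists (split_flow s f), g; split; [|split=> //; split; [|split=> //]].
- by move=> u w _; case/andP: (F_bounds u w).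
- move=> i v i_in v_at; have := f_bal i v i_in v_at.
  rewrite F_arc ?(F_arc i.+1); try lia.
  have [/eqP s_eq1|s_ne1] := boolP (size s == 1%N).
    have -> : i = 1%N by lia.
    (* On the route 0, v, 0 the reverse of each arc is the other arc, which
       carries f/2 rather than (C - f)/2. *)
    have rpt20 := rpt_size1 s_eq1.
    have F21 : split_flow s f (rpt s 2) (rpt s 1) = f (rpt s 0) (rpt s 1) / 2.
      by rewrite rpt20 (F_arc 1%N).
    have F10 : split_flow s f (rpt s 1) (rpt s 0) = f (rpt s 1) (rpt s 2) / 2.
      by rewrite -rpt20 (F_arc 2%N) //; lia.
    by rewrite /= F21 F10; lra.
  by rewrite F_rev ?(F_rev i.+1) //=; try lia; lra.
- by move=> i i_in; have := F_bounds (rpt s i.-1) (rpt s i);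
    have := F_bounds (rpt s i) (rpt s i.-1); lra.
Qed.

Lemma inY_of_inY_twoway s :
  is_route s -> (forall v, 0 <= y v) -> inY_twoway s -> inY R C d s y.
Proof.
move=> [s_uniq s_gt0] y_ge0 [F [g [F_ge0 [g_ge0 [F_bal [F_le g_le]]]]]].
split=> //.
have f_arc u w : route_arc s u w -> 0 <= net_flow s F u w <= c.
  move=> uw_arc; rewrite /net_flow uw_arc.
  move: uw_arc => /route_arcP [j [j_in [<- <-]]].
  have step_neq := rpt_step_neq s_uniq s_gt0 j_in.
  have := F_ge0 _ _ step_neq; rewrite eq_sym in step_neq.
  have := F_ge0 _ _ step_neq.
  have := F_le j j_in; lra.
exists (net_flow s F), g; split; [|split=> //; split; [|split=> //]].
- move=> u w _; case uw_arc: (route_arc s u w).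
    by case/andP: (f_arc _ _ uw_arc).
  by rewrite /net_flow uw_arc.
- move=> i v i_in v_at; have := F_bal i v i_in v_at.
  rewrite /net_flow route_arc_rpt ?(route_arc_rpt (j:=i.+1)) /=; try lia.
  lra.
- by move=> i /route_arc_rpt/f_arc; case/andP.
Qed.

Lemma inY_twowayP s :
  is_route s -> (forall v, 0 <= y v) -> inY R C d s y <-> inY_twoway s.
Proof.
move=> s_route y_ge0.
by split; [exact: inY_twoway_of_inY | exact: inY_of_inY_twoway].
Qed.

End TwoWayFlows.

Lemma is_route_rev (T : eqType) (s : seq T) : is_route s -> is_route (rev s).
Proof. by case=> s_uniq s_gt0; rewrite /is_route rev_uniq size_rev. Qed.

Theorem lemma1 (R : realType) (T : finType) (C : rat) (N : nat)
    (d : 'I_N -> T -> rat)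
    (HC : 0 < C) (Hd : forall xi v, 0 <= d xi v <= C)
    (s : seq T) (Hs : is_route s) (xi : 'I_N) (y : T -> int)
    (Hy : forall v, 0 <= y v) :
  (inY R C (d xi) s y <->
   exists (f : option T -> option T -> R) (g : T -> R),
     (forall u w, u != w -> 0 <= f u w) /\
     (forall v, 0 <= g v) /\
     (forall i v, (0 < i <= size s)%N -> rpt s i = Some v ->
        f (rpt s i.-1) (rpt s i) + f (rpt s i.+1) (rpt s i) + ratr (d xi v)
        = f (rpt s i) (rpt s i.+1) + f (rpt s i) (rpt s i.-1) + g v) /\
     (forall i, (0 < i <= (size s).+1)%N ->
        f (rpt s i.-1) (rpt s i) <= ratr C / 2 /\
        f (rpt s i) (rpt s i.-1) <= ratr C / 2) /\
     (forall i v, (0 < i <= size s)%N -> rpt s i = Some v ->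
        g v <= ratr C * (y v)%:~R))
  /\ (inY R C (d xi) s y <-> inY R C (d xi) (rev s) y).
Proof.
split; first exact: inY_twowayP.
rewrite (inY_twowayP _ _ _ Hs Hy) (inY_twowayP _ _ _ (is_route_rev Hs) Hy).
by split=> [|/inY_twoway_rev]; [exact: inY_twoway_rev | rewrite revK].
Qed.
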